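(* Let $\Lambda=(I,\varphi_i,\gamma_{ij})$ be a direct system of formulas in a functional language $\mathcal{L}$, $\mathcal{B}$ an $\mathcal{L}$-algebra, and suppose every $\varphi_i$ is realizable in $\mathcal{B}$, so that $\mathcal{B}_\Lambda=L(\Lambda)$ is a limit algebra over $\mathcal{B}$. Then there exists an ultrafilter $D$ over $I$ such that $\mathcal{B}_\Lambda$ embeds into the ultrapower $\mathcal{B}^I/D$.
   Context: Functional language: operation symbols $F$ (arity $n_F$) and constants only. A diagram-formula in a finite reduct $\mathcal{L}'$ of $\mathcal{L}$ in a finite variable set $X$ is a conjunction of atomic formulas and negated atomic formulas of $\mathcal{L}'$ such that: $\neg(x=y)$ is a conjunct for all distinct $x,y\in X$; for each operation $F\in\mathcal{L}'$ and $(x_0,\dots,x_{n_F})\in X^{n_F+1}$ exactly one of $F(x_1,\dots,x_{n_F})=x_0$ and its negation is a conjunct; for each constant $c\in\mathcal{L}'$ and $x\in X$ exactly one of $x=c$, $\neg(x=c)$ is a conjunct. A direct system of formulas $\Lambda=(I,\varphi_i,\gamma_{ij})$: $(I,\le)$ directed; each $\varphi_i$ a consistent diagram-formula in a finite reduct $\mathcal{L}_i$ and finite variables $X_i$; maps $\gamma_{ij}:X_i\to X_j$ ($i\le j$) with $\gamma_{ii}=\mathrm{id}$, $\gamma_{jk}\gamma_{ij}=\gamma_{ik}$, every conjunct of $\varphi_i(\gamma_{ij}(X_i))$ a conjunct of $\varphi_j$; every constant $c$ appears in a conjunct $x=c$ of some $\varphi_i$; for every $F$, $i$, $(x_1,\dots,x_{n_F})\in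 X_i^{n_F}$ some $j\ge i$ has a conjunct $F(\gamma_{ij}(x_1),\dots,\gamma_{ij}(x_{n_F}))=x_j$, $x_j\in X_j$. The limit algebra $L(\Lambda)$: universe $\{(x,i):x\in X_i\}/\!\equiv$ with $(x,i)\equiv(y,j)$ iff $\gamma_{ik}(x)=\gamma_{jk}(y)$ for some $k\ge i,j$; constants and operations are read off from conjuncts $x=c$ and $F(\gamma_{i_1j}(x_1),\dots)=x_j$ of the $\varphi_j$ (well defined). $\varphi_i$ is realizable in $\mathcal{B}$ if it is true under some assignment $X_i\to B$. *)

From Stdlib Require List.
From mathcomp Require Import all_boot.
Set Implicit Arguments.
Unset Strict Implicit.
Unset Printing Implicit Defensive.

Record language := Language {
  Op : Type;
  ar : Op -> nat;
  Cst : Type }.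

Record algebra (L : language) := Algebra {
  carrier :> Type;
  opI : forall F : Op L, ('I_(ar F) -> carrier) -> carrier;
  cstI : Cst L -> carrier }.
Arguments opI {L} a F args.
Arguments cstI {L} a c.

Definition finite_pred (T : Type) (P : T -> Prop) : Prop :=
  exists s : seq T, forall x, P x -> List.In x s.

(* A diagram-formula in the finite reduct (dOp, dCst) of L in the finite
   variable set X.  Its conjuncts are:
     ~(x = y)                    for all distinct x, y in X;
     F(xs) = x0  if dF F xs x0,  ~(F(xs) = x0) otherwise   (F in dOp);
     x = c       if dC c x,      ~(x = c) otherwise        (c in dCst).
   (dF / dC outside the reduct are irrelevant.) *)
Record diagram (L : language) (X : finType) := Diagram {
  dOp : Op L -> Prop;
  dCst : Cst L -> Prop;
  dOp_fin : finite_pred dOp;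
  dCst_fin : finite_pred dCst;
  dF : forall F : Op L, ('I_(ar F) -> X) -> X -> bool;
  dC : Cst L -> X -> bool }.
Arguments dF {L X} d F xs x0.
Arguments dC {L X} d c x.
Arguments dOp {L X} d F.
Arguments dCst {L X} d c.

Definition holds (L : language) (X : finType) (A : algebra L)
    (phi : diagram L X) (a : X -> A) : Prop :=
  (forall x y : X, x <> y -> a x <> a y) /\
  (forall F, dOp phi F -> forall (xs : 'I_(ar F) -> X) (x0 : X),
      dF phi F xs x0 <-> opI A F (fun m => a (xs m)) = a x0) /\
  (forall c, dCst phi c -> forall x : X,
      dC phi c x <-> cstI A c = a x).

Arguments holds {L X} A phi a.

Definition consistent (L : language) (X : finType) (phi : diagram L X) : Prop :=
  exists (A : algebra L) (a : X -> A), holds A phi a.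

Definition realizable (L : language) (X : finType) (B : algebra L)
    (phi : diagram L X) : Prop :=
  exists a : X -> B, holds B phi a.

Arguments realizable {L X} B phi.

Record dsystem (L : language) := DSystem {
  ix : Type;
  le : ix -> ix -> Prop;
  vars : ix -> finType;
  phi : forall i, diagram L (vars i);
  gam : forall i j, vars i -> vars j }.
Arguments gam {L} d i j x.
Arguments le {L} d i j.
Arguments phi {L} d i.
Arguments vars {L} d i.    (* gamma_ij, meaningful for i <= j *)

Definition is_direct_system (L : language) (S : dsystem L) : Prop :=
  inhabited (ix S) /\
  (forall i, le S i i) /\
  (forall i j k, le S i j -> le S j k -> le S i k) /\
  (forall i j, exists k, le S i k /\ le S j k) /\
  (forall i, consistent (phi S i)) /\
  (forall i (x : vars S i), gam S i i x = x) /\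
  (forall i j k, le S i j -> le S j k ->
     forall x : vars S i, gam S j k (gam S i j x) = gam S i k x) /\
  (* every conjunct of phi_i(gamma_ij(X_i)) is a conjunct of phi_j *)
  (forall i j, le S i j ->
     (forall x y : vars S i, x <> y -> gam S i j x <> gam S i j y) /\
     (forall F, dOp (phi S i) F ->
        dOp (phi S j) F /\
        forall (xs : 'I_(ar F) -> vars S i) (x0 : vars S i),
          dF (phi S j) F (fun m => gam S i j (xs m)) (gam S i j x0)
          = dF (phi S i) F xs x0) /\
     (forall c, dCst (phi S i) c ->
        dCst (phi S j) c /\
        forall x : vars S i, dC (phi S j) c (gam S i j x) = dC (phi S i) c x)) /\
  (forall c : Cst L, exists i (x : vars S i),
     dCst (phi S i) c /\ dC (phi S i) c x) /\
  (forall (F : Op L) i (xs : 'I_(ar F) -> vars S i),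
     exists j (x : vars S j), le S i j /\ dOp (phi S j) F /\
       dF (phi S j) F (fun m => gam S i j (xs m)) x).

(* The limit algebra L(Lambda), presented on representatives (i, x)    *)

Definition lim_elt (L : language) (S : dsystem L) := {i : ix S & vars S i}.

Definition lim_equiv (L : language) (S : dsystem L) (p q : lim_elt S) : Prop :=
  exists k, le S (projT1 p) k /\ le S (projT1 q) k /\
    gam S (projT1 p) k (projT2 p) = gam S (projT1 q) k (projT2 q).

(* the interpretation of the constant c in L(Lambda) is the class of p *)
Definition lim_cst (L : language) (S : dsystem L) (c : Cst L) (p : lim_elt S)
  : Prop :=
  exists i (x : vars S i),
    dCst (phi S i) c /\ dC (phi S i) c x /\ lim_equiv p (existT _ i x).

(* F([ps 0], ..., [ps (n-1)]) = [p] in L(Lambda) *)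
Definition lim_op (L : language) (S : dsystem L) (F : Op L)
    (ps : 'I_(ar F) -> lim_elt S) (p : lim_elt S) : Prop :=
  exists j (x : vars S j),
    (forall m, le S (projT1 (ps m)) j) /\
    dOp (phi S j) F /\
    dF (phi S j) F (fun m => gam S (projT1 (ps m)) j (projT2 (ps m))) x /\
    lim_equiv p (existT _ j x).

Definition ultrafilter (I : Type) (D : (I -> Prop) -> Prop) : Prop :=
  D (fun _ => True) /\
  ~ D (fun _ => False) /\
  (forall A B, D A -> D B -> D (fun k => A k /\ B k)) /\
  (forall A B : I -> Prop, (forall k, A k -> B k) -> D A -> D B) /\
  (forall A : I -> Prop, D A \/ D (fun k => ~ A k)).

(* Elements of B^I/D are represented by f : I -> B, with f ~ g iff
   {k | f k = g k} \in D; operations and constants are pointwise. *)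
Definition ueq (I : Type) (D : (I -> Prop) -> Prop) (B : Type) (f g : I -> B)
  : Prop := D (fun k => f k = g k).

Definition embeds_limit (L : language) (S : dsystem L) (B : algebra L)
    (D : (ix S -> Prop) -> Prop) (h : lim_elt S -> ix S -> B) : Prop :=
  (* well defined on classes and injective *)
  (forall p q, lim_equiv p q <-> ueq D (h p) (h q)) /\
  (forall c p, lim_cst c p -> ueq D (h p) (fun _ => cstI B c)) /\
  (forall F (ps : 'I_(ar F) -> lim_elt S) p, lim_op ps p ->
     ueq D (h p) (fun k => opI B F (fun m => h (ps m) k))).
Arguments embeds_limit {L S} B D h.

(* Fix a realization a_k : X_k -> B of every phi_k.  An element (x, i) of the
   limit is sent to the I-sequence k |-> a_k (gamma_ik x), which is meaningful
   on the cone {k | i <= k}.  Take an ultrafilter D on I containing all cones;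
   it exists because I is directed.  Since gamma_ik is compatible with the
   diagrams and a_k is injective and realizes phi_k, two elements are
   identified in L(Lambda) iff their sequences agree on a cone, hence iff they
   agree D-almost everywhere; constants and operations agree on a cone as
   well, so they are preserved in B^I/D. *)

From mathcomp Require Import all_boot.
From mathcomp Require Import boolp classical_sets filter.

Lemma UltraFilter_ultrafilter {I : Type} (D : set_system I) :
  UltraFilter D -> ultrafilter D.
Proof.
move=> DU; have DF : ProperFilter D by case: DU.
split; first exact: filterT.
split; first exact: filter_not_empty.
split; first by move=> A B DA DB; exact: filterI.
split; first by move=> A B AB DA; exact: filterS DA.
by move=> A; exact: in_ultra_setVsetC.
Qed.

Section CofinalUltrafilter.

Context {I : Type} {le : I -> I -> Prop}.
Hypothesis I_inhabited : inhabited I.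
Hypothesis le_refl : forall i, le i i.
Hypothesis le_trans : forall i j k, le i j -> le j k -> le i k.
Hypothesis le_directed : forall i j, exists k, le i k /\ le j k.

Definition cone (i : I) : set I := [set k | le i k].

Definition cone_filter : set_system I := filter_from setT cone.

Lemma cone_filter_proper : ProperFilter cone_filter.
Proof.
apply: filter_from_proper => [|i _]; last by exists i; exact: le_refl.
apply: filter_from_filter; first by case: I_inhabited => i; exists i.
move=> i j _ _; have [k [ik jk]] := le_directed i j.
by exists k => // l kl; split; apply: le_trans kl.
Qed.

Lemma cofinal_ultrafilter_exists :
  exists D : set_system I, UltraFilter D /\ forall i, D (cone i).
Proof.
have [D [DU coneD]] := ultraFilterLemma cone_filter_proper.
by exists D; split=> // i; apply: coneD; exists i.
Qed.

End CofinalUltrafilter.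

Arguments cone {I} le i.

Lemma holds_inj {L : language} {X : finType} {A : algebra L}
    {phi : diagram L X} {a : X -> A} :
  holds A phi a -> injective a.
Proof. by move=> [dist _] x y axy; apply: contrapT => /dist. Qed.

Section LimitEmbedding.

Context {L : language} {S : dsystem L} {B : algebra L}.
Notation I := (ix S).
Notation le := (le S).
Notation gam := (gam S).

Hypothesis le_trans : forall i j k, le i j -> le j k -> le i k.
Hypothesis gam_comp : forall {i j k}, le i j -> le j k ->
  forall x : vars S i, gam j k (gam i j x) = gam i k x.
Hypothesis gam_dF : forall {i j}, le i j ->
  forall F, dOp (phi S i) F -> dOp (phi S j) F /\
    forall (xs : 'I_(ar F) -> vars S i) (x0 : vars S i),
      dF (phi S j) F (fun m => gam i j (xs m)) (gam i j x0) = dF (phi S i) F xs x0.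
Hypothesis gam_dC : forall {i j}, le i j ->
  forall c, dCst (phi S i) c -> dCst (phi S j) c /\
    forall x : vars S i, dC (phi S j) c (gam i j x) = dC (phi S i) c x.

Variable a : forall i, vars S i -> B.
Hypothesis a_holds : forall i, holds B (phi S i) (a i).

Variable D : set_system I.
Hypothesis D_proper : ProperFilter D.
Hypothesis D_cone : forall i, D (cone le i).

(* Off the cone of [projT1 p] the value is irrelevant. *)
Definition lim_seq (p : lim_elt S) (k : I) : B :=
  if pselect (le (projT1 p) k) is left ik then a k (gam _ k (projT2 p))
  else a (projT1 p) (projT2 p).

Lemma lim_seqE p k : le (projT1 p) k -> lim_seq p k = a k (gam _ k (projT2 p)).
Proof. by rewrite /lim_seq; case: pselect. Qed.

Lemma D_cone_superset i (P : I -> Prop) :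
  (forall k, le i k -> P k) -> D P.
Proof. by move=> iP; apply: filterS (D_cone i). Qed.

Lemma lim_equiv_ueq {p q} : lim_equiv p q -> ueq D (lim_seq p) (lim_seq q).
Proof.
case: p q => [i x] [j y] [m /= [im [jm xy]]].
apply: (D_cone_superset m) => k mk.
rewrite !lim_seqE /=; try exact: le_trans mk.
by rewrite -(gam_comp im mk) -(gam_comp jm mk) xy.
Qed.

Lemma ueq_lim_equiv p q : ueq D (lim_seq p) (lim_seq q) -> lim_equiv p q.
Proof.
case: p q => [i x] [j y]; rewrite /ueq => pq.
have cone_ij : D (fun k => le i k /\ le j k) by exact: filterI (D_cone i) (D_cone j).
have [k [xy_k [ik jk]]] := filter_ex (filterI pq cone_ij).
exists k; split=> //; split=> //=.
by apply: (holds_inj (a_holds k)); move: xy_k; rewrite !lim_seqE.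
Qed.

Lemma lim_seq_cst c p : lim_cst c p -> ueq D (lim_seq p) (fun _ => cstI B c).
Proof.
move=> [i [x [ci [cx px]]]].
rewrite /ueq; apply: filterS (filterI (lim_equiv_ueq px) (D_cone i)) => k [-> ik].
rewrite lim_seqE //=; have [ck gam_cx] := gam_dC ik _ ci.
have [_ [_ holds_c]] := a_holds k.
by apply/esym/(holds_c c ck); rewrite gam_cx.
Qed.

Lemma lim_seq_op F (ps : 'I_(ar F) -> lim_elt S) p :
  lim_op ps p -> ueq D (lim_seq p) (fun k => opI B F (fun m => lim_seq (ps m) k)).
Proof.
move=> [j [x [psj [Fj [Fx px]]]]].
rewrite /ueq; apply: filterS (filterI (lim_equiv_ueq px) (D_cone j)) => k [-> jk].
rewrite lim_seqE //=; have [Fk gam_Fx] := gam_dF jk _ Fj.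
have [_ [holds_F _]] := a_holds k.
have -> : (fun m => lim_seq (ps m) k) =
    (fun m => a k (gam j k (gam _ j (projT2 (ps m))))).
  by apply: funext => m; rewrite lim_seqE ?(gam_comp (psj m) jk) //; exact: le_trans jk.
by apply/esym/(holds_F F Fk); rewrite gam_Fx.
Qed.

Lemma lim_seq_embeds : embeds_limit B D lim_seq.
Proof.
split; last split.
- by move=> p q; split; [exact: lim_equiv_ueq | exact: ueq_lim_equiv].
- exact: lim_seq_cst.
- exact: lim_seq_op.
Qed.

End LimitEmbedding.

Theorem mainTheorem11 (L : language) (S : dsystem L) (B : algebra L) :
  is_direct_system S ->
  (forall i, realizable B (phi S i)) ->
  exists D : (ix S -> Prop) -> Prop,
    ultrafilter D /\ exists h : lim_elt S -> ix S -> B, embeds_limit B D h.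
Proof.
move=> [I_inh [le_refl [le_trans [le_dir [_ [_ [gam_comp [gam_mono _]]]]]]]] realB.
have [D [DU D_cone]] := cofinal_ultrafilter_exists I_inh le_refl le_trans le_dir.
have D_proper : ProperFilter D by case: DU.
pose a i := projT1 (cid (realB i)).
have a_holds i : holds B (phi S i) (a i) := projT2 (cid (realB i)).
exists D; split; first exact: UltraFilter_ultrafilter.
exists (lim_seq a).
apply: lim_seq_embeds => // [i j ij F Fi|i j ij c ci].
- by have [_ [gam_F _]] := gam_mono i j ij; exact: gam_F.
- by have [_ [_ gam_c]] := gam_mono i j ij; exact: gam_c.
Qed.
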